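(* Let $S,T$ be numberings of shape $\lambda\vdash n$, let $1\le i\le \ell(\lambda)-1$, and let $Q$ be a nonempty subset of the entries in row $i+1$ of $S$. Define \[ \gamma_Q^T(S)=\sum_{U\in \Xi_{i,Q}(S)}\sigma_{U,T}\,a_U\in \widetilde{\mathcal M}^T . \] Then $\gamma_Q^T(S)\in\ker\Psi^T$.
   Context: Permutations in $\mathfrak S_n$ act on $[n]$, products are compositions $(\sigma\tau)(k)=\sigma(\tau(k))$. A numbering of shape $\lambda\vdash n$ is a filling of the Young diagram of $\lambda$ (rows indexed top to bottom; $\ell(\lambda)$ = number of rows) with $1,\dots,n$, each exactly once. For $\pi\in\mathfrak S_n$, $\pi\cdot T$ replaces each entry $k$ by $\pi(k)$; $\sigma_{T,S}$ is the unique permutation with $\sigma_{T,S}\cdot T=S$. $R(T)$, $C(T)$ are the row and column groups; $a_T=\sum_{\rho\in R(T)}\rho$, $b_T=\sum_{\zeta\in C(T)}\operatorname{sgn}(\zeta)\zeta$. Let $\widetilde{\mathcal M}^T=a_T\,\mathbb C[\mathfrak S_n]$ be the right $\mathbb C[\mathfrak S_n]$-submodule generated by $a_T$ (note $\sigma_{U,T}a_U=a_T\sigma_{U,T}\in\widetilde{\mathcal M}^T$), and let $\Psi^T:\widetilde{\mathcal M}^T\to\mathbb C[\mathfrak S_n]$ be the right-module homomorphism $a_Tx\mapsto b_Ta_Tx$. The set $\Xi_{i,Q}(S)$ consists of the numberings obtained from $S$ as follows, one for each pair $(A,B)$ with $A\subseteq Q$, $B$ a subset of the entries of row $i$ of $S$,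 and $|A|=|B|$ (possibly $A=B=\emptyset$): the entries of $A$ are moved to the positions of row $i$ previously occupied by $B$, and the entries of $B$ to the positions of row $i+1$ previously occupied by $A$, preserving relative order (the $k$-th leftmost element of $A$ goes to the position of the $k$-th leftmost element of $B$ and vice versa). *)

From HB Require Import structures.
From mathcomp Require Import all_boot all_order all_algebra all_fingroup all_field.
Set Implicit Arguments. Unset Strict Implicit. Unset Printing Implicit Defensive.
Import GRing.Theory Num.Theory.
Local Open Scope ring_scope.

(* Entries of a numbering are 'I_n = {0,..,n-1} (paper: 1..n, shifted by one).
   Rows and columns are 0-indexed (paper: rows 1..l(lambda)).
   A numbering T is represented by the position map T : 'I_n -> nat * nat,
   sending an entry k to its cell (row, column). *)

Definition is_partition (n : nat) (lam : seq nat) : bool :=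
  [&& sorted geq lam, all (fun p => 0 < p)%N lam & sumn lam == n].

Definition in_shape (lam : seq nat) (c : nat * nat) : bool :=
  (c.1 < size lam)%N && (c.2 < nth 0%N lam c.1)%N.

Definition numbering (n : nat) (lam : seq nat) (T : 'I_n -> nat * nat) : Prop :=
  (forall k, in_shape lam (T k)) /\ injective T.

(* The group algebra C[S_n], C realized as algC; elements are coefficient
   functions. Paper composition: (pcomp s t) k = s (t k). *)
Definition galg (n : nat) := {ffun 'S_n -> algC}.

Definition pcomp n (s t : 'S_n) : 'S_n := (t * s)%g.

Definition gmul n (f g : galg n) : galg n :=
  [ffun p => \sum_(s : 'S_n) \sum_(t : 'S_n) ((pcomp s t == p)%:R * f s * g t)].

Definition gdelta n (s : 'S_n) : galg n := [ffun p => (p == s)%:R].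

Definition sigmaTS n (T S : 'I_n -> nat * nat) : 'S_n :=
  odflt 1%g [pick s : 'S_n | [forall k, S (s k) == T k]].

Definition row_group n (T : 'I_n -> nat * nat) : pred 'S_n :=
  fun r => [forall k, (T (r k)).1 == (T k).1].
Definition col_group n (T : 'I_n -> nat * nat) : pred 'S_n :=
  fun z => [forall k, (T (z k)).2 == (T k).2].

Definition aT n (T : 'I_n -> nat * nat) : galg n :=
  [ffun p => (row_group T p)%:R].
Definition bT n (T : 'I_n -> nat * nat) : galg n :=
  [ffun p => if col_group T p then (-1) ^+ odd_perm p else 0].

Definition row_entries n (S : 'I_n -> nat * nat) (r : nat) : {set 'I_n} :=
  [set k | (S k).1 == r].

Definition by_col n (S : 'I_n -> nat * nat) (X : {set 'I_n}) : seq 'I_n :=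
  sort (fun x y => ((S x).2 <= (S y).2)%N) (enum X).

(* The numbering of Xi_{i,Q}(S) attached to (A,B): the k-th leftmost element of A
   goes to the position of the k-th leftmost element of B and vice versa. *)
Definition xi_move n (S : 'I_n -> nat * nat) (A B : {set 'I_n}) : 'I_n -> nat * nat :=
  fun k =>
    if k \in A then S (nth k (by_col S B) (index k (by_col S A)))
    else if k \in B then S (nth k (by_col S A) (index k (by_col S B)))
    else S k.

Definition gammaQ n (T S : 'I_n -> nat * nat) (i : nat) (Q : {set 'I_n}) : galg n :=
  \sum_(AB : {set 'I_n} * {set 'I_n} |
          [&& AB.1 \subset Q, AB.2 \subset row_entries S i & #|AB.1| == #|AB.2|])
    gmul (gdelta (sigmaTS (xi_move S AB.1 AB.2) T)) (aT (xi_move S AB.1 AB.2)).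

From Pilot Require Import Defs.
From HB Require Import structures.
From mathcomp Require Import all_boot all_order all_algebra all_fingroup all_field.
Set Implicit Arguments. Unset Strict Implicit. Unset Printing Implicit Defensive.
Import GRing.Theory Num.Theory.
Local Open Scope ring_scope.

(* Conjugating by sigma_{S,T} reduces everything to the numbering S: each U in
   Xi_{i,Q}(S) is S relabelled by the involution pi_{A,B} exchanging A and B, and
   sigma_{U,T} a_U = a_T sigma_{S,T} pi_{A,B}, so gamma = a_T sigma_{S,T} D with
   D = sum_{A,B} pi_{A,B}.  Let X be the entries of row i and Y = X u Q.  The
   pi_{A,B} form a transversal of H = {h in Sym Y | h X = X} in Sym Y, and H lies in
   R(S), so |H| a_S D = a_S Sym Y.  Finally b_S rho Sym Y = 0 for every rho in R(S):
   rho moves some q in Q to a cell of row i+1, and the transposition tau in C(S) of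
   that entry with the one just above it satisfies rho^-1 tau rho in Sym Y, whence
   b_S rho Sym Y = b_S tau rho Sym Y = - b_S rho Sym Y. *)

Section GroupAlgebra.
Variable n : nat.
Implicit Types (f g h : galg n) (s t p : 'S_n) (G H : {set 'S_n}).

Definition gind G : galg n := [ffun p => (p \in G)%:R].

Lemma gmulE f g p : gmul f g p = \sum_t f (t^-1 * p)%g * g t.
Proof.
rewrite ffunE exchange_big /=; apply: eq_bigr => t _.
rewrite (bigD1 (t^-1 * p)%g) //= /Defs.pcomp mulKVg eqxx mul1r big1 ?addr0 // => s nsp.
by case: eqP => [E|]; rewrite ?mul0r //; case/eqP: nsp; rewrite -E mulKg.
Qed.

Lemma gmulA f g h : gmul (gmul f g) h = gmul f (gmul g h).
Proof.
apply/ffunP => p; rewrite !gmulE.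
under eq_bigr do rewrite gmulE mulr_suml.
under [RHS]eq_bigr do rewrite gmulE mulr_sumr.
rewrite [RHS]exchange_big /=; apply: eq_bigr => u _.
rewrite [RHS](reindex_inj (mulgI u)) /=; apply: eq_bigr => v _.
by rewrite invMg mulKg mulgA mulrA.
Qed.

Lemma gmulDl f g h : gmul (f + g) h = gmul f h + gmul g h.
Proof.
apply/ffunP => p; rewrite [RHS]ffunE !gmulE -big_split.
by apply: eq_bigr => t _; rewrite ffunE mulrDl.
Qed.

Lemma gmulDr f g h : gmul f (g + h) = gmul f g + gmul f h.
Proof.
apply/ffunP => p; rewrite [RHS]ffunE !gmulE -big_split.
by apply: eq_bigr => t _; rewrite ffunE mulrDr.
Qed.

Lemma gmul0r f : gmul 0 f = 0.
Proof. by apply/ffunP => p; rewrite gmulE [RHS]ffunE big1 // => t _; rewrite ffunE mul0r. Qed.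

Lemma gmulr0 f : gmul f 0 = 0.
Proof. by apply/ffunP => p; rewrite gmulE [RHS]ffunE big1 // => t _; rewrite ffunE mulr0. Qed.

Lemma gmulNl f g : gmul (- f) g = - gmul f g.
Proof.
apply/ffunP => p; rewrite [RHS]ffunE !gmulE -sumrN.
by apply: eq_bigr => t _; rewrite ffunE mulNr.
Qed.

Lemma gmul_suml (I : Type) (r : seq I) (P : pred I) (F : I -> galg n) g :
  gmul (\sum_(i <- r | P i) F i) g = \sum_(i <- r | P i) gmul (F i) g.
Proof.
by apply: (big_morph (fun x : galg n => gmul x g)); [move=> ? ?; apply: gmulDl | apply: gmul0r].
Qed.

Lemma gmul_sumr (I : Type) (r : seq I) (P : pred I) (F : I -> galg n) f :
  gmul f (\sum_(i <- r | P i) F i) = \sum_(i <- r | P i) gmul f (F i).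
Proof. by apply: (big_morph (gmul f)); [apply: gmulDr | apply: gmulr0]. Qed.

Lemma gmulMnl f g m : gmul (f *+ m) g = gmul f g *+ m.
Proof. by elim: m => [|m IHm]; rewrite ?gmul0r // !mulrS gmulDl IHm. Qed.

Lemma gmulMnr f g m : gmul f (g *+ m) = gmul f g *+ m.
Proof. by elim: m => [|m IHm]; rewrite ?gmulr0 // !mulrS gmulDr IHm. Qed.

Lemma galg_mulrn_eq0 f m : (0 < m)%N -> f *+ m = 0 -> f = 0.
Proof.
move=> m_gt0 /ffunP fm0; apply/ffunP => p; move/eqP: (fm0 p).
by rewrite ffunMnE !ffunE mulrn_eq0 eqn0Ngt m_gt0 => /eqP.
Qed.

Lemma gdelta_mull s f p : gmul (gdelta s) f p = f (p * s^-1)%g.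
Proof.
rewrite gmulE (bigD1 (p * s^-1)%g) //= ffunE invMg invgK mulgKV eqxx mul1r.
rewrite big1 ?addr0 // => t nts; rewrite ffunE.
case: eqP => [E|]; rewrite ?mul0r //.
by case/eqP: nts; rewrite -[p](mulKVg t) E mulgK.
Qed.

Lemma gdelta_mulr s f p : gmul f (gdelta s) p = f (s^-1 * p)%g.
Proof.
rewrite gmulE (bigD1 s) //= ffunE eqxx mulr1 big1 ?addr0 // => t nts.
by rewrite ffunE (negbTE nts) mulr0.
Qed.

Lemma gdeltaM s t : gmul (gdelta s) (gdelta t) = gdelta (t * s)%g.
Proof.
apply/ffunP => p; rewrite gdelta_mull !ffunE.
by congr (nat_of_bool _)%:R; apply/eqP/eqP => [<-|->]; rewrite ?mulgKV ?mulgK.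
Qed.

Lemma gdelta_conj s f g : (forall r, f r = g (r ^ s)%g) ->
  gmul (gdelta s) f = gmul g (gdelta s).
Proof.
by move=> fg; apply/ffunP => p; rewrite gdelta_mull gdelta_mulr fg /conjg !mulgA mulgKV.
Qed.

Lemma gind_sum G : gind G = \sum_(g in G) gdelta g.
Proof.
apply/ffunP => p; rewrite sum_ffunE ffunE.
under eq_bigr do rewrite ffunE.
case: (boolP (p \in G)) => pG.
  by rewrite (bigD1 p) //= eqxx big1 ?addr0 // => g /andP[_ /negbTE]; rewrite eq_sym => ->.
by rewrite big1 // => g gG; case: eqP pG => // ->; rewrite gG.
Qed.

Lemma gdelta_mul_gind (G : {group 'S_n}) s : s \in G -> gmul (gdelta s) (gind G) = gind G.
Proof. by move=> sG; apply/ffunP => p; rewrite gdelta_mull !ffunE groupMr ?groupV. Qed.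

Lemma gind_mul_gdelta (G : {group 'S_n}) s : s \in G -> gmul (gind G) (gdelta s) = gind G.
Proof. by move=> sG; apply/ffunP => p; rewrite gdelta_mulr !ffunE groupMl ?groupV. Qed.

Lemma gind_mul_subgroup (G H : {group 'S_n}) : H \subset G ->
  gmul (gind G) (gind H) = gind G *+ #|H|.
Proof.
move=> /subsetP sHG; rewrite [gind H]gind_sum gmul_sumr -sumr_const.
by apply: eq_bigr => h hH; apply: gind_mul_gdelta (sHG h hH).
Qed.

Lemma gind_mul_transversal (J : finType) (P : pred J) (p : J -> 'S_n) H G (j0 : 'S_n -> J) :
  (forall x, x \in G -> P (j0 x)) ->
  (forall j x, P j -> ((p j)^-1 * x \in H)%g = (x \in G) && (j == j0 x)) ->
  gmul (gind H) (\sum_(j | P j) gdelta (p j)) = gind G.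
Proof.
move=> Pj0 pH; rewrite gmul_sumr; apply/ffunP => x; rewrite sum_ffunE ffunE.
under eq_bigr => j Pj do rewrite gdelta_mulr ffunE pH //.
case: (boolP (x \in G)) => xG /=; last by rewrite big1.
by rewrite (bigD1 (j0 x)) ?Pj0 //= eqxx big1 ?addr0 // => j /andP[_ /negbTE ->].
Qed.

End GroupAlgebra.

Section Stabiliser.
Variables (T : finType) (U : eqType).
Implicit Types (F : T -> U) (r s : {perm T}).

Definition fstab F : {set {perm T}} := [set s : {perm T} | [forall k, F (s k) == F k]].

Lemma fstabP F s : reflect (forall k, F (s k) = F k) (s \in fstab F).
Proof. by rewrite inE; apply: (iffP forallP) => sF k; apply/eqP. Qed.

Lemma group_set_fstab F : group_set (fstab F).
Proof.
apply/group_setP; split=> [|s t /fstabP sF /fstabP tF]; apply/fstabP => k.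
  by rewrite perm1.
by rewrite permM tF sF.
Qed.

Canonical fstab_group F := Group (group_set_fstab F).

Lemma fstab_mulVl F s t : ((s^-1 * t)%g \in fstab F) = [forall k, F (t k) == F (s k)].
Proof.
apply/fstabP/forallP => st k; last by rewrite permM (eqP (st _)) permKV.
by apply/eqP; rewrite -(st (s k)) permM permK.
Qed.

Lemma fstab_comp F G s : (forall k, G k = F (s k)) ->
  forall r, (r \in fstab G) = (r ^ s \in fstab F)%g.
Proof.
move=> GF r; apply/fstabP/fstabP => rG k; last by rewrite !GF -permJ rG.
by rewrite -(permKV s k) permJ -!GF rG.
Qed.

End Stabiliser.

Notation row_stab T := (fstab (fun k => (T k).1)).
Notation col_stab T := (fstab (fun k => (T k).2)).

Section YoungSymmetrisers.
Variable n : nat.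
Implicit Types (T U : 'I_n -> nat * nat) (s : 'S_n) (x : galg n).

Lemma aTE T : aT T = gind (row_stab T).
Proof. by apply/ffunP => p; rewrite !ffunE inE. Qed.

Lemma bTE T p : bT T p = if p \in col_stab T then (-1) ^+ odd_perm p else 0.
Proof. by rewrite ffunE inE. Qed.

Lemma gdelta_aT_conj T U s : (forall k, U k = T (s k)) ->
  gmul (gdelta s) (aT U) = gmul (aT T) (gdelta s).
Proof.
move=> UT; apply: gdelta_conj => r; rewrite !aTE !ffunE.
by rewrite (@fstab_comp _ _ (fun k => (T k).1) _ s) // => k; rewrite UT.
Qed.

Lemma gdelta_bT_conj T U s : (forall k, U k = T (s k)) ->
  gmul (gdelta s) (bT U) = gmul (bT T) (gdelta s).
Proof.
move=> UT; apply: gdelta_conj => r; rewrite !bTE odd_permJ.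
by rewrite (@fstab_comp _ _ (fun k => (T k).2) _ s) // => k; rewrite UT.
Qed.

Lemma bT_mul_odd T tau : tau \in col_stab T -> odd_perm tau ->
  gmul (bT T) (gdelta tau) = - bT T.
Proof.
move=> tauC tau_odd; apply/ffunP => p.
rewrite gdelta_mulr [RHS]ffunE !bTE groupMl ?groupV // odd_permM odd_permV tau_odd.
by case: ifP => _; rewrite ?oppr0 //; case: (odd_perm p); rewrite ?expr0 ?expr1 ?opprK.
Qed.

Lemma bT_mul_eq0 T tau x : tau \in col_stab T -> odd_perm tau ->
  gmul (gdelta tau) x = x -> gmul (bT T) x = 0.
Proof.
move=> tauC tau_odd tau_x.
have bxN : gmul (bT T) x = - gmul (bT T) x by rewrite -{1}tau_x -gmulA bT_mul_odd // gmulNl.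
by apply: (@galg_mulrn_eq0 _ _ 2) => //; rewrite mulr2n {2}bxN subrr.
Qed.

End YoungSymmetrisers.

Section Numberings.
Variables (n : nat) (lam : seq nat).
Hypothesis lam_part : is_partition n lam.
Implicit Types (S T U : 'I_n -> nat * nat).

Lemma numbering_surj T : numbering lam T -> forall c, in_shape lam c -> exists k, T k = c.
Proof.
case/and3P: lam_part => _ _ /eqP sum_lam [T_shape T_inj] c c_shape.
pose cells := [seq (r, j) | r <- iota 0 (size lam), j <- iota 0 (nth 0%N lam r)].
have cellsP d : in_shape lam d -> d \in cells.
  by case: d => r j /andP[? ?]; apply/allpairsPdep; exists r, j; rewrite !mem_iota.
have size_cells : size cells = n.
  rewrite size_allpairs_dep -sum_lam -[in RHS](mkseq_nth 0%N lam).
  by congr sumn; apply: eq_map => r; rewrite size_iota.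
have [_ imT] : (size (map T (enum 'I_n)) = size cells) * (map T (enum 'I_n) =i cells).
  apply: uniq_min_size.
  - by rewrite map_inj_uniq ?enum_uniq.
  - by move=> _ /mapP[k _ ->]; apply: cellsP.
  - by rewrite size_map size_enum_ord size_cells.
by move: (cellsP c c_shape); rewrite -imT => /mapP[k _ ->]; exists k.
Qed.

Lemma sigmaTS_spec U T : numbering lam U -> numbering lam T ->
  forall k, T (sigmaTS U T k) = U k.
Proof.
move=> [U_shape U_inj] numT.
pose f k := odflt k [pick k' | T k' == U k].
have fP k : T (f k) = U k.
  rewrite /f; case: pickP => [k' /eqP //|noT].
  by have [k' Tk'] := numbering_surj numT (U_shape k); move: (noT k'); rewrite Tk' eqxx.
have f_inj : injective f by move=> a b fab; apply: U_inj; rewrite -!fP fab.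
rewrite /sigmaTS; case: pickP => [s /forallP sP k | noS]; first exact/eqP.
by move/forallP: (noS (perm f_inj)) => []; move=> k; rewrite permE fP.
Qed.

Lemma sigmaTS_trans U S T : numbering lam U -> numbering lam S -> numbering lam T ->
  sigmaTS U T = (sigmaTS U S * sigmaTS S T)%g.
Proof.
move=> numU numS numT; apply/permP => k; apply: (proj2 numT).
by rewrite permM !sigmaTS_spec.
Qed.

End Numberings.

Definition seq_swap (T : eqType) (sA sB : seq T) (k : T) : T :=
  if k \in sA then nth k sB (index k sA)
  else if k \in sB then nth k sA (index k sB) else k.

Section SeqSwap.
Variables (T : eqType) (sA sB : seq T).
Hypotheses (uB : uniq sB) (size_AB : size sA = size sB).

Lemma seq_swapC : ~~ has (mem sB) sA -> seq_swap sA sB =1 seq_swap sB sA.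
Proof.
move=> /hasPn disjAB k; rewrite /seq_swap.
case: ifP => kA; last by case: ifP.
by have /negbTE-> : k \notin sB by apply: disjAB.
Qed.

Lemma seq_swap_out k : k \notin sA -> k \notin sB -> seq_swap sA sB k = k.
Proof. by rewrite /seq_swap => /negbTE-> /negbTE->. Qed.

Lemma seq_swap_memA k : k \in sA -> seq_swap sA sB k \in sB.
Proof. by move=> kA; rewrite /seq_swap kA mem_nth // -size_AB index_mem. Qed.

Lemma seq_swapK_memA k : ~~ has (mem sB) sA -> k \in sA ->
  seq_swap sA sB (seq_swap sA sB k) = k.
Proof.
move=> disjAB kA; have kB := seq_swap_memA kA.
rewrite seq_swapC // {1}/seq_swap kB /seq_swap kA index_uniq ?nth_index //.
by rewrite -size_AB index_mem.
Qed.

End SeqSwap.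

Section SeqSwapSym.
Variables (T : eqType) (sA sB : seq T).
Hypotheses (uA : uniq sA) (uB : uniq sB) (size_AB : size sA = size sB)
  (disjAB : ~~ has (mem sB) sA).

Let disjBA : ~~ has (mem sA) sB. Proof. by rewrite has_sym. Qed.

Lemma seq_swap_memB k : k \in sB -> seq_swap sA sB k \in sA.
Proof. by move=> kB; rewrite seq_swapC // seq_swap_memA. Qed.

Lemma seq_swapK : involutive (seq_swap sA sB).
Proof.
move=> k; case: (boolP (k \in sA)) => [kA|nkA]; first exact: seq_swapK_memA.
case: (boolP (k \in sB)) => [kB|nkB]; last by rewrite !seq_swap_out.
by rewrite !(seq_swapC disjAB) seq_swapK_memA.
Qed.

End SeqSwapSym.

Lemma partition_nthS_leq n lam i : is_partition n lam -> (i.+1 < size lam)%N ->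
  (nth 0 lam i.+1 <= nth 0 lam i)%N.
Proof. by case/and3P => /sortedP lam_sorted _ _; apply: lam_sorted. Qed.

Lemma setDU_eq_pair (T : finType) (X Q A B Z : {set T}) :
  [disjoint X & Q] -> A \subset Q -> B \subset X -> Z \subset X :|: Q ->
  ((X :\: B) :|: A == Z) = ((A, B) == (Z :&: Q, X :\: Z)).
Proof.
move=> XQ /subsetP AQ /subsetP BX /subsetP ZXQ.
have memP x : [&& (x \in A) ==> (x \in Q), (x \in B) ==> (x \in X),
                (x \in Z) ==> (x \in X :|: Q) & ~~ ((x \in X) && (x \in Q))].
  apply/and4P; split; try by apply/implyP; auto.
  by apply/negP => /andP[xX]; rewrite (disjointFr XQ xX).
apply/eqP/eqP => [ZE | [AE BE]].
  by congr pair; apply/setP => x; move: (memP x); rewrite -ZE !inE;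
     case: (x \in A); case: (x \in B); case: (x \in X); case: (x \in Q).
apply/setP => x; move: (memP x); rewrite AE BE !inE.
by case: (x \in Z); case: (x \in X); case: (x \in Q).
Qed.

Section ByCol.
Variables (n : nat) (S : 'I_n -> nat * nat) (X : {set 'I_n}).

Lemma perm_by_col : perm_eq (by_col S X) (enum X).
Proof. by rewrite perm_sort. Qed.

Lemma mem_by_col : by_col S X =i X.
Proof. by move=> k; rewrite (perm_mem perm_by_col) mem_enum. Qed.

Lemma by_col_uniq : uniq (by_col S X).
Proof. by rewrite (perm_uniq perm_by_col) enum_uniq. Qed.

Lemma size_by_col : size (by_col S X) = #|X|.
Proof. by rewrite (perm_size perm_by_col) cardE. Qed.

End ByCol.

Lemma xi_moveE n (S : 'I_n -> nat * nat) A B k :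
  xi_move S A B k = S (seq_swap (by_col S A) (by_col S B) k).
Proof. by rewrite /xi_move /seq_swap !mem_by_col; case: ifP => //; case: ifP. Qed.

Section Garnir.
Variables (n : nat) (lam : seq nat) (S : 'I_n -> nat * nat) (i : nat) (Q : {set 'I_n}).
Hypotheses (lam_part : is_partition n lam) (numS : numbering lam S)
  (i_lt : (i.+1 < size lam)%N) (Q_ne0 : Q != set0) (QS : Q \subset row_entries S i.+1).

Local Notation X := (row_entries S i).
Local Notation Y := (X :|: Q).
Local Notation H := (Sym Y :&: fstab (fun k => k \in X)).
Local Notation swap AB := (seq_swap (by_col S AB.1) (by_col S AB.2)).

Definition garnir_pair (AB : {set 'I_n} * {set 'I_n}) : bool :=
  [&& AB.1 \subset Q, AB.2 \subset X & #|AB.1| == #|AB.2|].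

Definition garnir_perm AB : 'S_n := sigmaTS (xi_move S AB.1 AB.2) S.

Definition garnir : galg n := \sum_(AB | garnir_pair AB) gdelta (garnir_perm AB).

Definition garnir_index (g : 'S_n) := (g @^-1: X :&: Q, X :\: g @^-1: X).

Lemma disjoint_row_Q : [disjoint X & Q].
Proof.
rewrite disjoint_sym disjoints_subset; apply/subsetP => k /(subsetP QS).
by rewrite !inE => /eqP ->; rewrite eqn_leq ltnn.
Qed.

Section GarnirPair.
Variables (A B : {set 'I_n}).
Hypothesis AB_pair : garnir_pair (A, B).

Let AQ : A \subset Q. Proof. by case/and3P: AB_pair. Qed.
Let BX : B \subset X. Proof. by case/and3P: AB_pair. Qed.

Let swap_hyps :
  [/\ uniq (by_col S A), uniq (by_col S B), size (by_col S A) = size (by_col S B)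
    & ~~ has (mem (by_col S B)) (by_col S A)].
Proof.
split; rewrite ?by_col_uniq ?size_by_col //; first by case/and3P: AB_pair => _ _ /eqP.
apply/hasPn => k /=; rewrite !mem_by_col => /(subsetP AQ) kQ.
by apply/negP => /(subsetP BX) kX; rewrite (disjointFr disjoint_row_Q kX) in kQ.
Qed.

Lemma garnir_swapK : involutive (swap (A, B)).
Proof. by have [? ? ? ?] := swap_hyps; apply: seq_swapK. Qed.

Lemma numbering_xi_move : numbering lam (xi_move S A B).
Proof.
case: numS => S_shape S_inj; split=> [k | k l]; rewrite !xi_moveE //.
by move/S_inj; apply: (can_inj garnir_swapK).
Qed.

Lemma garnir_permE : garnir_perm (A, B) =1 swap (A, B).
Proof.
move=> k; apply: (proj2 numS).
by rewrite (sigmaTS_spec lam_part numbering_xi_move numS) xi_moveE.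
Qed.

Lemma garnir_perm_Sym : garnir_perm (A, B) \in Sym Y.
Proof.
rewrite inE; apply/subsetP => k; rewrite inE garnir_permE; apply: contraNT.
rewrite in_setU negb_or => /andP[kX kQ]; apply/eqP/seq_swap_out; rewrite mem_by_col.
  by apply: contra kQ; apply/subsetP.
by apply: contra kX; apply/subsetP.
Qed.

Lemma garnir_perm_preim : garnir_perm (A, B) @^-1: X = (X :\: B) :|: A.
Proof.
have [uA uB sAB dAB] := swap_hyps.
apply/setP => k; rewrite [k \in _ @^-1: _]inE in_setU in_setD garnir_permE /=.
case kA: (k \in A); rewrite /= ?orbT ?orbF.
  by apply: (subsetP BX); rewrite -(mem_by_col S) seq_swap_memA ?mem_by_col.
case kB: (k \in B) => /=.
  apply: (disjointFl disjoint_row_Q); apply: (subsetP AQ).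
  by rewrite -(mem_by_col S) seq_swap_memB ?mem_by_col.
by rewrite seq_swap_out ?mem_by_col ?kA ?kB.
Qed.

End GarnirPair.

Lemma preim_Sym_sub g : g \in Sym Y -> g @^-1: X \subset Y.
Proof.
rewrite inE => gY; apply/subsetP => k; rewrite inE => gkX.
by rewrite -(perm_closed _ gY) in_setU gkX.
Qed.

Lemma garnir_pair_index g : g \in Sym Y -> garnir_pair (garnir_index g).
Proof.
move=> gY; rewrite /garnir_pair /= subsetIr subsetDl /=; set Z := g @^-1: X.
have ZQ : Z :&: Q = Z :\: X.
  apply/setP => k; rewrite in_setI in_setD; case kX: (k \in X) => /=.
    by rewrite (disjointFr disjoint_row_Q kX) andbF.
  case kZ: (k \in Z) => //=.
  by have := subsetP (preim_Sym_sub gY) k kZ; rewrite in_setU kX.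
rewrite ZQ; apply/eqP/(@addnI #|X :&: Z|).
by rewrite cardsID setIC cardsID card_preimset //; apply: perm_inj.
Qed.

Lemma garnir_perm_coset AB g : garnir_pair AB ->
  ((garnir_perm AB)^-1 * g \in H)%g = (g \in Sym Y) && (AB == garnir_index g).
Proof.
case: AB => A B AB_pair; have piY := garnir_perm_Sym AB_pair.
rewrite in_setI groupMl ?groupV // fstab_mulVl.
case: (boolP (g \in Sym Y)) => //= gY.
have -> : [forall k, (g k \in X) == (garnir_perm (A, B) k \in X)]
          = (g @^-1: X == garnir_perm (A, B) @^-1: X).
  apply/forallP/eqP => [gpi | /setP gpi k].
    by apply/setP => k; rewrite ![k \in _ @^-1: _]inE; apply/eqP.
  by have := gpi k; rewrite ![k \in _ @^-1: _]inE => ->.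
have /and3P[AQ BX _] := AB_pair.
rewrite garnir_perm_preim // eq_sym.
exact: setDU_eq_pair disjoint_row_Q AQ BX (preim_Sym_sub gY).
Qed.

Lemma garnir_coset : gmul (gind H) garnir = gind (Sym Y).
Proof. exact: gind_mul_transversal garnir_pair_index garnir_perm_coset. Qed.

Lemma garnir_sub_row_stab : H \subset row_stab S.
Proof.
apply/subsetP => h; rewrite in_setI inE => /andP[hY /fstabP hX]; apply/fstabP => k.
have [kX | nkX] := boolP (k \in X).
  by move: (kX) (kX); rewrite -{1}hX !inE => /eqP-> /eqP->.
have [kQ | nkQ] := boolP (k \in Q); last by rewrite (out_perm hY) // in_setU negb_or nkX.
have hkQ : h k \in Q.
  by move: (perm_closed k hY); rewrite !in_setU (negbTE nkX) hX (negbTE nkX) kQ.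
by move: (subsetP QS _ kQ) (subsetP QS _ hkQ); rewrite !inE => /eqP-> /eqP->.
Qed.

Lemma garnir_vanish r : r \in row_stab S ->
  gmul (bT S) (gmul (gdelta r) (gind (Sym Y))) = 0.
Proof.
move=> rR; have [q qQ] := set0Pn _ Q_ne0; set d := r q.
have row_d : (S d).1 = i.+1.
  by rewrite (fstabP _ _ rR); move: (subsetP QS _ qQ); rewrite inE => /eqP.
have [c Sc] : exists c, S c = (i, (S d).2).
  apply: (numbering_surj lam_part numS); rewrite /in_shape /= (ltnW i_lt) /=.
  case: numS => S_shape _; move: (S_shape d); rewrite /in_shape row_d => /andP[_ col_d].
  exact: leq_trans col_d (partition_nthS_leq lam_part i_lt).
have cd : c != d by apply/eqP => cd; move: row_d; rewrite -cd Sc => /n_Sn.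
apply: (@bT_mul_eq0 _ _ (tperm c d)); rewrite ?odd_tperm //.
  by apply/fstabP => k; case: tpermP => // ->; rewrite Sc.
have tauJ : (tperm c d ^ r^-1)%g \in Sym Y.
  rewrite tpermJ inE; apply: subset_trans (tperm_on _ _) _.
  rewrite subUset !sub1set /d permK !in_setU qQ orbT andbT.
  by rewrite inE (fstabP _ _ (groupVr rR)) Sc eqxx.
rewrite -gmulA gdeltaM.
have -> : (r * tperm c d = (tperm c d ^ r^-1) * r)%g by rewrite conjgE invgK mulgA mulgKV.
by rewrite -gdeltaM gmulA gdelta_mul_gind.
Qed.

Lemma garnir_eq0 : gmul (bT S) (gmul (aT S) garnir) = 0.
Proof.
have aS_SymY : gmul (aT S) (gind (Sym Y)) = gmul (aT S) garnir *+ #|H|.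
  by rewrite -garnir_coset -gmulA aTE gind_mul_subgroup ?garnir_sub_row_stab // gmulMnl.
apply: (@galg_mulrn_eq0 _ _ #|H|); first exact: cardG_gt0.
rewrite -gmulMnr -aS_SymY aTE [gind (row_stab S)]gind_sum gmul_suml gmul_sumr.
by rewrite big1 // => r; apply: garnir_vanish.
Qed.

End Garnir.

Theorem lemma2p14 (n : nat) (lam : seq nat) (S T : 'I_n -> nat * nat)
    (i : nat) (Q : {set 'I_n}) :
  is_partition n lam -> numbering lam S -> numbering lam T ->
  (i.+1 < size lam)%N ->
  Q != set0 -> Q \subset row_entries S i.+1 ->
  (exists x : galg n, gammaQ T S i Q = gmul (aT T) x) /\
  gmul (bT T) (gammaQ T S i Q) = 0.
Proof.
move=> lam_part numS numT i_lt Q_ne0 QS.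
have sigmaE U : numbering lam U -> forall k, U k = T (sigmaTS U T k).
  by move=> numU k; rewrite (sigmaTS_spec lam_part numU numT).
have gammaE : gammaQ T S i Q = gmul (aT T) (gmul (gdelta (sigmaTS S T)) (garnir S i Q)).
  rewrite /gammaQ /garnir !gmul_sumr; apply: eq_bigr => -[A B] AB_pair.
  have numU := numbering_xi_move numS QS AB_pair.
  rewrite (gdelta_aT_conj (sigmaE _ numU)) (sigmaTS_trans lam_part numU numS numT).
  by rewrite gdeltaM.
split; first by exists (gmul (gdelta (sigmaTS S T)) (garnir S i Q)).
rewrite gammaE -(gmulA (aT T)) -(gdelta_aT_conj (sigmaE _ numS)) gmulA.
rewrite -(gmulA (bT T)) -(gdelta_bT_conj (sigmaE _ numS)) gmulA.
by rewrite (garnir_eq0 lam_part numS i_lt Q_ne0 QS) gmulr0.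
Qed.
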